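(* There exist $\rho_0>0$ and $K_0\ge1$ (depending only on $R$) such that for every $\ell=\ell_{(a,b,c,d)}\in\mathcal{L}_{SL_2}$, the map $F_\ell:\mathcal{L}_{SL_2}\to\mathbb{R}^3$, $F_\ell(\ell_{(a',b',c',d')})=(A,B,C)$ with $$A=(c,d)\cdot(d',-c'),\quad B=(a,b,c,d)\cdot(d',-c',b',-a'),\quad C=(a,b)\cdot(b',-a'),$$ is bilipschitz on $\{\ell'\in\mathcal{L}_{SL_2}: d(\ell,\ell')<\rho_0\}$ with bilipschitz constant at most $K_0$.
   Context: For $(a,b,c,d)\in\mathbb{R}^4$ with $ad-bc=1$, $\ell_{(a,b,c,d)}=\{(a,b,0)+s(c,d,1):s\in\mathbb{R}\}$; $\mathcal{L}_{SL_2}$ is the set of such lines, each identified with its parameter $(a,b,c,d)\in\mathbb{R}^4$, and $d(\cdot,\cdot)$ is the Euclidean distance between parameters (bilipschitz is with respect to this distance). A number $R\ge1$ is fixed and only lines whose parameter lies in $B(0,R)\subset\mathbb{R}^4$ are considered (i.e. $\mathcal{L}_{SL_2}$ stands for $\mathcal{L}_{SL_2}\cap B(0,R)$). *)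

From Stdlib Require Import Reals Lra.
Open Scope R_scope.

(* Parameters (a,b,c,d) of lines in R^4, and points of R^3. *)
Definition R4 : Type := (R * R * R * R)%type.
Definition R3 : Type := (R * R * R)%type.

Definition inSL2 (p : R4) : Prop :=
  let '(a, b, c, d) := p in a * d - b * c = 1.

Definition norm4 (p : R4) : R :=
  let '(a, b, c, d) := p in sqrt (a*a + b*b + c*c + d*d).
Definition dist4 (p q : R4) : R :=
  let '(a, b, c, d) := p in let '(a', b', c', d') := q in
  sqrt ((a-a')*(a-a') + (b-b')*(b-b') + (c-c')*(c-c') + (d-d')*(d-d')).
Definition dist3 (x y : R3) : R :=
  let '(u, v, w) := x in let '(u', v', w') := y in
  sqrt ((u-u')*(u-u') + (v-v')*(v-v') + (w-w')*(w-w')).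

(* L_SL2 ∩ B(0,R): parameters with ad-bc=1 lying in the open ball B(0,R). *)
Definition LSL2 (Rad : R) (p : R4) : Prop := inSL2 p /\ norm4 p < Rad.

Definition F (l l' : R4) : R3 :=
  let '(a, b, c, d) := l in let '(a', b', c', d') := l' in
  (c * d' - d * c',
   a * d' - b * c' + c * b' - d * a',
   a * b' - b * a').

From Stdlib Require Import Reals Lra Psatz.
Open Scope R_scope.

(* F l is linear in its second argument, so the upper bound is Cauchy-Schwarz.
   For the lower bound let N be the polarization of det at l.  Cramer's rule inverts
   v |-> (F l v, N v) when det l = 1, giving |v|^2 <= |l|^2 (|F l v|^2 + (N v)^2).
   If l1, l2 lie on the quadric det = 1 within distance rho of l, expanding
   det l1 - det l2 = 0 around l gives |N (l1 - l2)| <= rho |l1 - l2|; for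
   rho = 1/(2R) this term is absorbed into the left-hand side, whence K = 2R. *)

Definition sub4 (p q : R4) : R4 :=
  let '(a, b, c, d) := p in let '(a', b', c', d') := q in
  (a - a', b - b', c - c', d - d').

Definition sqnorm4 (p : R4) : R :=
  let '(a, b, c, d) := p in a * a + b * b + c * c + d * d.

Definition sqnorm3 (x : R3) : R :=
  let '(u, v, w) := x in u * u + v * v + w * w.

Definition det4 (p : R4) : R :=
  let '(a, b, c, d) := p in a * d - b * c.

(* Twice the symmetric bilinear form of the quadratic form det4. *)
Definition polar_det (p q : R4) : R :=
  let '(a, b, c, d) := p in let '(a', b', c', d') := q in
  a * d' + d * a' - b * c' - c * b'.

Lemma cauchy_schwarz4 (u1 u2 u3 u4 v1 v2 v3 v4 : R) :
  (u1 * v1 + u2 * v2 + u3 * v3 + u4 * v4) ^ 2 <=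
  (u1 * u1 + u2 * u2 + u3 * u3 + u4 * u4) * (v1 * v1 + v2 * v2 + v3 * v3 + v4 * v4).
Proof.
  assert (Lagrange :
    (u1 * u1 + u2 * u2 + u3 * u3 + u4 * u4) * (v1 * v1 + v2 * v2 + v3 * v3 + v4 * v4)
    - (u1 * v1 + u2 * v2 + u3 * v3 + u4 * v4) ^ 2 =
    (u1 * v2 - u2 * v1) ^ 2 + (u1 * v3 - u3 * v1) ^ 2 + (u1 * v4 - u4 * v1) ^ 2
    + (u2 * v3 - u3 * v2) ^ 2 + (u2 * v4 - u4 * v2) ^ 2 + (u3 * v4 - u4 * v3) ^ 2)
    by ring.
  pose proof (pow2_ge_0 (u1 * v2 - u2 * v1)); pose proof (pow2_ge_0 (u1 * v3 - u3 * v1)).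
  pose proof (pow2_ge_0 (u1 * v4 - u4 * v1)); pose proof (pow2_ge_0 (u2 * v3 - u3 * v2)).
  pose proof (pow2_ge_0 (u2 * v4 - u4 * v2)); pose proof (pow2_ge_0 (u3 * v4 - u4 * v3)).
  lra.
Qed.

Lemma sqrt_lt_sqr (x r : R) : 0 <= x -> sqrt x < r -> x < r * r.
Proof.
  intros Hx Hlt. pose proof (sqrt_pos x).
  rewrite <- (sqrt_sqrt x Hx). nra.
Qed.

Lemma sqrt_le_mul_sqrt (x y k : R) :
  0 <= k -> 0 <= y -> x <= k * k * y -> sqrt x <= k * sqrt y.
Proof.
  intros Hk Hy Hxy.
  rewrite <- (sqrt_square k Hk), <- sqrt_mult by nra.
  apply sqrt_le_1_alt. exact Hxy.
Qed.

Lemma sqnorm4_nonneg (p : R4) : 0 <= sqnorm4 p.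
Proof. destruct p as [[[a b] c] d]; simpl; nra. Qed.

Lemma sqnorm3_nonneg (x : R3) : 0 <= sqnorm3 x.
Proof. destruct x as [[u v] w]; simpl; nra. Qed.

Lemma inSL2_det4 (p : R4) : inSL2 p -> det4 p = 1.
Proof. now destruct p as [[[a b] c] d]. Qed.

Lemma norm4_sqnorm4 (p : R4) : norm4 p = sqrt (sqnorm4 p).
Proof. now destruct p as [[[a b] c] d]. Qed.

Lemma dist4_sqnorm4 (p q : R4) : dist4 p q = sqrt (sqnorm4 (sub4 p q)).
Proof. now destruct p as [[[a b] c] d], q as [[[a' b'] c'] d']. Qed.

Lemma sqnorm4_subC (p q : R4) : sqnorm4 (sub4 p q) = sqnorm4 (sub4 q p).
Proof. destruct p as [[[a b] c] d], q as [[[a' b'] c'] d']; simpl; ring. Qed.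

Lemma dist3_F (l p q : R4) :
  dist3 (F l p) (F l q) = sqrt (sqnorm3 (F l (sub4 p q))).
Proof.
  destruct l as [[[a b] c] d], p as [[[a1 b1] c1] d1], q as [[[a2 b2] c2] d2].
  simpl; f_equal; ring.
Qed.

Lemma sqnorm3_F_le (l v : R4) : sqnorm3 (F l v) <= 3 * (sqnorm4 l * sqnorm4 v).
Proof.
  destruct l as [[[a b] c] d], v as [[[x y] z] w]; simpl.
  pose proof (cauchy_schwarz4 c d a b w (- z) 0 0) as HA.
  pose proof (cauchy_schwarz4 a b c d w (- z) y (- x)) as HB.
  pose proof (cauchy_schwarz4 a b c d y (- x) 0 0) as HC.
  nra.
Qed.

Lemma polar_det_sq_le (p q : R4) : polar_det p q ^ 2 <= sqnorm4 p * sqnorm4 q.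
Proof.
  destruct p as [[[a b] c] d], q as [[[a' b'] c'] d']; simpl.
  pose proof (cauchy_schwarz4 a b c d d' (- c') (- b') a') as H.
  replace (d' * d' + - c' * - c' + - b' * - b' + a' * a')
    with (a' * a' + b' * b' + c' * c' + d' * d') in H by ring.
  replace (a * d' + b * - c' + c * - b' + d * a')
    with (a * d' + d * a' - b * c' - c * b') in H by ring.
  exact H.
Qed.

(* Taylor expansion of det4 p - det4 q around l; it is exact since det4 is quadratic. *)
Lemma det4_sub_expand (l p q : R4) :
  2 * polar_det l (sub4 p q) + polar_det (sub4 p l) (sub4 p q)
  + polar_det (sub4 q l) (sub4 p q) = 2 * (det4 p - det4 q).
Proof.
  destruct l as [[[a b] c] d], p as [[[a1 b1] c1] d1], q as [[[a2 b2] c2] d2].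
  simpl; ring.
Qed.

Lemma polar_det_sub_sq_le (l l1 l2 : R4) (r : R) :
  det4 l1 = det4 l2 -> dist4 l l1 < r -> dist4 l l2 < r ->
  polar_det l (sub4 l1 l2) ^ 2 <= r * r * sqnorm4 (sub4 l1 l2).
Proof.
  intros Hdet Hd1 Hd2.
  rewrite dist4_sqnorm4, sqnorm4_subC in Hd1, Hd2.
  apply sqrt_lt_sqr in Hd1, Hd2; try apply sqnorm4_nonneg.
  pose proof (det4_sub_expand l l1 l2) as Hexp.
  rewrite Hdet, Rminus_diag, Rmult_0_r in Hexp.
  pose proof (polar_det_sq_le (sub4 l1 l) (sub4 l1 l2)) as H1.
  pose proof (polar_det_sq_le (sub4 l2 l) (sub4 l1 l2)) as H2.
  pose proof (sqnorm4_nonneg (sub4 l1 l2)).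
  set (N := polar_det l (sub4 l1 l2)) in *.
  set (N1 := polar_det (sub4 l1 l) (sub4 l1 l2)) in *.
  set (N2 := polar_det (sub4 l2 l) (sub4 l1 l2)) in *.
  assert (HN : 4 * N ^ 2 = (N1 + N2) ^ 2) by (replace (N1 + N2) with (- (2 * N)) by lra; ring).
  pose proof (pow2_ge_0 (N1 - N2)).
  nra.
Qed.

(* Cramer's rule: each coordinate of det4 l * v is a combination, with two entries
   of l as coefficients, of the components of F l v and of polar_det l v. *)
Lemma det4_sq_sqnorm4_le (l v : R4) :
  det4 l ^ 2 * sqnorm4 v <= sqnorm4 l * (sqnorm3 (F l v) + polar_det l v ^ 2).
Proof.
  destruct l as [[[a b] c] d], v as [[[x y] z] w]; simpl.
  set (A := c * w - d * z). set (C := a * y - b * x).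
  set (P := a * w - b * z). set (Q := c * y - d * x).
  assert (Hw : ((a * d - b * c) * w) ^ 2 <= (d * d + b * b) * (P * P + A * A)).
  { replace ((a * d - b * c) * w) with (d * P - b * A) by (unfold P, A; ring).
    pose proof (pow2_ge_0 (d * A + b * P)); nra. }
  assert (Hz : ((a * d - b * c) * z) ^ 2 <= (c * c + a * a) * (P * P + A * A)).
  { replace ((a * d - b * c) * z) with (c * P - a * A) by (unfold P, A; ring).
    pose proof (pow2_ge_0 (c * A + a * P)); nra. }
  assert (Hy : ((a * d - b * c) * y) ^ 2 <= (d * d + b * b) * (C * C + Q * Q)).
  { replace ((a * d - b * c) * y) with (d * C - b * Q) by (unfold Q, C; ring).
    pose proof (pow2_ge_0 (d * Q + b * C)); nra. }
  assert (Hx : ((a * d - b * c) * x) ^ 2 <= (c * c + a * a) * (C * C + Q * Q)).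
  { replace ((a * d - b * c) * x) with (c * C - a * Q) by (unfold Q, C; ring).
    pose proof (pow2_ge_0 (c * Q + a * C)); nra. }
  apply Rle_trans with ((a * a + b * b + c * c + d * d) * ((P * P + A * A) + (C * C + Q * Q))).
  - replace ((a * d - b * c) ^ 2 * (x * x + y * y + z * z + w * w)) with
      (((a * d - b * c) * x) ^ 2 + ((a * d - b * c) * y) ^ 2
       + ((a * d - b * c) * z) ^ 2 + ((a * d - b * c) * w) ^ 2) by ring.
    replace ((a * a + b * b + c * c + d * d) * ((P * P + A * A) + (C * C + Q * Q))) with
      ((c * c + a * a) * (C * C + Q * Q) + (d * d + b * b) * (C * C + Q * Q)
       + (c * c + a * a) * (P * P + A * A) + (d * d + b * b) * (P * P + A * A)) by ring.
    lra.
  - apply Rmult_le_compat_l; [nra |].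
    assert (HBN : (a * w - b * z + c * y - d * x) * (a * w - b * z + c * y - d * x)
                  + (a * w + d * x - b * z - c * y) ^ 2 = 2 * (P * P + Q * Q))
      by (unfold P, Q; ring).
    assert (0 <= P * P + Q * Q) by nra.
    unfold P in *; lra.
Qed.

Lemma sqnorm4_le_sqnorm3_F (l v : R4) (r : R) :
  0 < r -> det4 l = 1 -> sqnorm4 l <= r * r ->
  polar_det l v ^ 2 <= / (2 * r) * / (2 * r) * sqnorm4 v ->
  sqnorm4 v <= 2 * r * (2 * r) * sqnorm3 (F l v).
Proof.
  intros Hr Hdet HL HN.
  pose proof (det4_sq_sqnorm4_le l v) as HD.
  rewrite Hdet, pow1, Rmult_1_l in HD.
  pose proof (sqnorm4_nonneg v); pose proof (sqnorm3_nonneg (F l v)).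
  pose proof (pow2_ge_0 (polar_det l v)).
  set (M := sqnorm3 (F l v)) in *. set (N := polar_det l v) in *.
  assert (HrN : r * r * N ^ 2 <= sqnorm4 v / 4).
  { replace (sqnorm4 v / 4) with (r * r * (/ (2 * r) * / (2 * r) * sqnorm4 v))
      by (field; lra).
    apply Rmult_le_compat_l; nra. }
  assert (HLM : sqnorm4 l * (M + N ^ 2) <= r * r * (M + N ^ 2))
    by (apply Rmult_le_compat_r; lra).
  nra.
Qed.

Theorem lemma2p5 (Rad : R) (HR : 1 <= Rad) :
  exists rho0 K0 : R, 0 < rho0 /\ 1 <= K0 /\
    forall l : R4, LSL2 Rad l ->
    forall l1 l2 : R4,
      LSL2 Rad l1 -> dist4 l l1 < rho0 ->
      LSL2 Rad l2 -> dist4 l l2 < rho0 ->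
      / K0 * dist4 l1 l2 <= dist3 (F l l1) (F l l2) /\
      dist3 (F l l1) (F l l2) <= K0 * dist4 l1 l2.
Proof.
  exists (/ (2 * Rad)), (2 * Rad).
  split; [apply Rinv_0_lt_compat; lra | split; [lra |]].
  intros l [Hl HlR] l1 l2 [Hl1 _] Hd1 [Hl2 _] Hd2.
  apply inSL2_det4 in Hl, Hl1, Hl2.
  assert (HL : sqnorm4 l < Rad * Rad).
  { apply sqrt_lt_sqr; [apply sqnorm4_nonneg | now rewrite <- norm4_sqnorm4]. }
  pose proof (polar_det_sub_sq_le l l1 l2 _ ltac:(congruence) Hd1 Hd2) as HN.
  pose proof (sqnorm3_F_le l (sub4 l1 l2)) as HM.
  pose proof (sqnorm4_nonneg (sub4 l1 l2)); pose proof (sqnorm3_nonneg (F l (sub4 l1 l2))).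
  rewrite dist3_F, dist4_sqnorm4.
  split.
  - apply (Rmult_le_reg_l (2 * Rad)); [lra |].
    rewrite <- Rmult_assoc, Rinv_r, Rmult_1_l by lra.
    apply sqrt_le_mul_sqrt; [lra | assumption |].
    apply sqnorm4_le_sqnorm3_F; [lra | assumption | lra | assumption].
  - apply sqrt_le_mul_sqrt; [lra | assumption | nra].
Qed.
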